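(* Let $P,PA$ be labelings, $c$ a command and $\rho_1,\rho_2,\mu_1,\mu_2$ states. Assume $\mathtt b\notin\mathrm{UsedVars}(c)$, $\rho_1(\mathtt b)=\rho_2(\mathtt b)=0$, $|a|_{\mu_1}>0$ and $|a|_{\mu_2}>0$ for every array $a$, $P;PA\vdash_{ct}c$, $\rho_1\sim_P\rho_2$ and $\mu_1\sim_{PA}\mu_2$. Then $\langle\mathrm{SiSLH}_P(c),\rho_1,\mu_1,\mathtt{false}\rangle\approx_s\langle\mathrm{SiSLH}_P(c),\rho_2,\mu_2,\mathtt{false}\rangle$.
   Context: Language AWhile: scalar variables $X\in\mathcal V$, array names $a\in\mathcal A$. Arithmetic expressions $e::=n\ (n\in\mathbb N)\mid X\mid \mathrm{op}_{\mathbb N}(e,\dots,e)\mid be\,?\,e_1:e_2$; boolean expressions $be::=\mathtt{true}\mid\mathtt{false}\mid\mathrm{cmp}(e,e)\mid\mathrm{op}_{\mathbb B}(be,\dots,be)$; commands $c::=\mathtt{skip}\mid X:=e\mid c_1;c_2\mid \mathtt{if}\ be\ \mathtt{then}\ c_1\ \mathtt{else}\ c_2\mid\mathtt{while}\ be\ \mathtt{do}\ c\mid X\leftarrow a[e]\mid a[e]\leftarrow e'$. A scalar state is $\rho:\mathcal V\to\mathbb N$; an array state $\mu$ gives each array $a$ a size $|a|_\mu$ and values $\mu(a)[i]$ for $0\le i<|a|_\mu$. $[\![\cdot]\!]_\rho$ is the usual pure evaluation. $\mathrm{UsedVars}(c)$ is the set of scalar variables occurring in $c$; $\mathtt b$ is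 a reserved scalar variable. Speculative semantics: configurations $\langle c,\rho,\mu,\beta\rangle$ with boolean misspeculation flag $\beta$; steps $\xrightarrow[d]{o}$ with optional observation $o\in\{\mathrm{branch}(v),\mathrm{read}(a,i),\mathrm{write}(a,i)\}$ and optional directive $d\in\{\mathit{step},\mathit{force},\mathrm{load}(a',j),\mathrm{store}(a',j)\}$. $X:=e\to\mathtt{skip}$ updating $\rho[X\mapsto[\![e]\!]_\rho]$; if $c_1$ steps to $c_1'$ then $c_1;c_2$ steps to $c_1';c_2$ with the same label; $\mathtt{skip};c\to c$; $\mathtt{while}\ be\ \mathtt{do}\ c\to\mathtt{if}\ be\ \mathtt{then}\ (c;\mathtt{while}\ be\ \mathtt{do}\ c)\ \mathtt{else}\ \mathtt{skip}$ (these keep $\beta$, have no observation/directive except as inherited). Conditional: with $\mathit{step}$ go to branch $v=[\![be]\!]_\rho$, flag unchanged; with $\mathit{force}$ go to branch $\neg v$ and set $\beta:=\mathtt{true}$; both observe $\mathrm{branch}(v)$. $X\leftarrow a[ie]$ with $\mathit{step}$: requires $i=[\![ie]\!]_\rho<|a|_\mu$, sets $X$ to $\mu(a)[i]$; with $\mathrm{load}(a',j)$: requires $\beta=\mathtt{true}$, $i\ge|a|_\mu$, $j<|a'|_\mu$, sets $X$ to $\mu(a')[j]$; both observe $\mathrm{read}(a,i)$. $a[ie]\leftarrow e$ with $\mathit{step}$: requires $i<|a|_\mu$, sets $\mu[a[i]\mapsto[\![e]\!]_\rho]$; with $\mathrm{store}(a',j)$: requires $\beta=\mathtt{true}$, $i\ge|a|_\mu$,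 $j<|a'|_\mu$, sets $\mu[a'[j]\mapsto[\![e]\!]_\rho]$; both observe $\mathrm{write}(a,i)$. Multi-step $\xrightarrow[D]{O}{}^*$ collects directives $D$ and observations $O$. $\langle c_1,\rho_1,\mu_1,\beta_1\rangle\approx_s\langle c_2,\rho_2,\mu_2,\beta_2\rangle$ iff for all $D,O_1,O_2$, if both configurations multi-step with directives $D$ producing $O_1$ resp. $O_2$, then $O_1=O_2$. Labels: $\mathtt{true}$=public, $\mathtt{false}$=secret; $\ell_1\sqsubseteq\ell_2$ iff $\ell_2=\mathtt{true}\Rightarrow\ell_1=\mathtt{true}$. $P:\mathcal V\to$ labels, $PA:\mathcal A\to$ labels; $P(e)$, $P(be)$ are public iff all scalar variables occurring are public. $\rho_1\sim_P\rho_2$ iff they agree on all $X$ with $P(X)=\mathtt{true}$; $\mu_1\sim_{PA}\mu_2$ iff they agree on sizes and contents of all $a$ with $PA(a)=\mathtt{true}$. CCT typing $P;PA\vdash_{ct}c$: $\mathtt{skip}$; $X:=e$ if $P(e)\sqsubseteq P(X)$; $c_1;c_2$ if both typed; $\mathtt{if}\ be\ \mathtt{then}\ c_1\ \mathtt{else}\ c_2$ if $P(be)=\mathtt{true}$ and both branches typed; $\mathtt{while}\ be\ \mathtt{do}\ c$ if $P(be)=\mathtt{true}$ and $c$ typed; $X\leftarrow a[i]$ if $P(i)=\mathtt{true}$ and $PA(a)\sqsubseteq P(X)$; $a[i]\leftarrow e$ if $P(i)=\mathtt{true}$ and $P(e)\sqsubseteq PA(a)$. Index-SLH recipe with parameters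 $B(be)$, $R(X,i)$, $W(i,e)$: $[\![\mathtt{skip}]\!]=\mathtt{skip}$; $[\![X:=e]\!]=X:=e$; $[\![c_1;c_2]\!]=[\![c_1]\!];[\![c_2]\!]$; $[\![\mathtt{if}\ be\ \mathtt{then}\ c_1\ \mathtt{else}\ c_2]\!]=\mathtt{if}\ B(be)\ \mathtt{then}\ (\mathtt b:=B(be)\,?\,\mathtt b:1;[\![c_1]\!])\ \mathtt{else}\ (\mathtt b:=B(be)\,?\,1:\mathtt b;[\![c_2]\!])$; $[\![\mathtt{while}\ be\ \mathtt{do}\ c]\!]=(\mathtt{while}\ B(be)\ \mathtt{do}\ (\mathtt b:=B(be)\,?\,\mathtt b:1;[\![c]\!]));\ \mathtt b:=B(be)\,?\,1:\mathtt b$; $[\![X\leftarrow a[i]]\!]=X\leftarrow a[R(X,i)]$; $[\![a[i]\leftarrow e]\!]=a[W(i,e)]\leftarrow e$. With $m(i)=(\mathtt b==1)\,?\,0:i$, $\mathrm{SiSLH}_P$ is the instance with $B(be)=be$; $R(X,i)=m(i)$ if $P(X)=\mathtt{true}$, else $i$; $W(i,e)=m(i)$ if $P(e)=\mathtt{false}$, else $i$. *)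

From Stdlib Require Import String List Arith Bool.
Import ListNotations.

Definition var := string.
Definition arr := string.

Inductive aexp : Type :=
  | ANum (n : nat)
  | AId (x : var)
  | AOp (f : list nat -> nat) (es : list aexp)
  | ACTIf (be : bexp) (e1 e2 : aexp)
with bexp : Type :=
  | BTrue
  | BFalse
  | BCmp (f : nat -> nat -> bool) (e1 e2 : aexp)
  | BOp (f : list bool -> bool) (bs : list bexp).

Inductive com : Type :=
  | Skip
  | Asgn (x : var) (e : aexp)
  | Seq (c1 c2 : com)
  | If (be : bexp) (c1 c2 : com)
  | While (be : bexp) (c : com)
  | ARead (x : var) (a : arr) (i : aexp)
  | AWrite (a : arr) (i : aexp) (e : aexp).

Definition reg := var -> nat.
Definition mem := arr -> list nat.

Fixpoint aeval (r : reg) (e : aexp) {struct e} : nat :=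
  match e with
  | ANum n => n
  | AId x => r x
  | AOp f es => f (map (aeval r) es)
  | ACTIf be e1 e2 => if beval r be then aeval r e1 else aeval r e2
  end
with beval (r : reg) (b : bexp) {struct b} : bool :=
  match b with
  | BTrue => true
  | BFalse => false
  | BCmp f e1 e2 => f (aeval r e1) (aeval r e2)
  | BOp f bs => f (map (beval r) bs)
  end.

Fixpoint avars (e : aexp) {struct e} : list var :=
  match e with
  | ANum _ => []
  | AId x => [x]
  | AOp _ es => flat_map avars es
  | ACTIf be e1 e2 => bvars be ++ avars e1 ++ avars e2
  end
with bvars (b : bexp) {struct b} : list var :=
  match b with
  | BTrue | BFalse => []
  | BCmp _ e1 e2 => avars e1 ++ avars e2
  | BOp _ bs => flat_map bvars bs
  end.

Fixpoint UsedVars (c : com) : list var :=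
  match c with
  | Skip => []
  | Asgn x e => x :: avars e
  | Seq c1 c2 => UsedVars c1 ++ UsedVars c2
  | If be c1 c2 => bvars be ++ UsedVars c1 ++ UsedVars c2
  | While be c => bvars be ++ UsedVars c
  | ARead x a i => x :: avars i
  | AWrite a i e => avars i ++ avars e
  end.

(* reserved misspeculation-mask variable b *)
Definition bvar : var := "b"%string.

Definition upd (r : reg) (x : var) (v : nat) : reg :=
  fun y => if String.eqb y x then v else r y.

Definition mupd (m : mem) (a : arr) (i v : nat) : mem :=
  fun a' => if String.eqb a' a then
              (firstn i (m a) ++ [v] ++ skipn (S i) (m a))%list
            else m a'.

Definition msize (m : mem) (a : arr) : nat := length (m a).
Definition mget (m : mem) (a : arr) (i : nat) : nat := nth i (m a) 0.

Inductive obs : Type :=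
  | OBranch (v : bool)
  | ORead (a : arr) (i : nat)
  | OWrite (a : arr) (i : nat).

Inductive dir : Type :=
  | DStep
  | DForce
  | DLoad (a : arr) (j : nat)
  | DStore (a : arr) (j : nat).

Definition opt_list {A} (o : option A) : list A :=
  match o with Some x => [x] | None => [] end.

(* configurations <c, rho, mu, beta>; spec_step c r m b o d c' r' m' b'
   with optional observation o and optional directive d *)
Inductive spec_step : com -> reg -> mem -> bool -> option obs -> option dir ->
                      com -> reg -> mem -> bool -> Prop :=
  | SS_Asgn : forall x e r m b,
      spec_step (Asgn x e) r m b None None Skip (upd r x (aeval r e)) m b
  | SS_Seq : forall c1 c1' c2 r m b o d r' m' b',
      spec_step c1 r m b o d c1' r' m' b' ->
      spec_step (Seq c1 c2) r m b o d (Seq c1' c2) r' m' b'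
  | SS_SeqSkip : forall c r m b,
      spec_step (Seq Skip c) r m b None None c r m b
  | SS_While : forall be c r m b,
      spec_step (While be c) r m b None None
                (If be (Seq c (While be c)) Skip) r m b
  | SS_IfStep : forall be c1 c2 r m b,
      spec_step (If be c1 c2) r m b (Some (OBranch (beval r be))) (Some DStep)
                (if beval r be then c1 else c2) r m b
  | SS_IfForce : forall be c1 c2 r m b,
      spec_step (If be c1 c2) r m b (Some (OBranch (beval r be))) (Some DForce)
                (if negb (beval r be) then c1 else c2) r m true
  | SS_ReadStep : forall x a ie r m b i,
      i = aeval r ie -> i < msize m a ->
      spec_step (ARead x a ie) r m b (Some (ORead a i)) (Some DStep)
                Skip (upd r x (mget m a i)) m b
  | SS_ReadLoad : forall x a ie r m i a' j,
      i = aeval r ie -> msize m a <= i -> j < msize m a' ->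
      spec_step (ARead x a ie) r m true (Some (ORead a i)) (Some (DLoad a' j))
                Skip (upd r x (mget m a' j)) m true
  | SS_WriteStep : forall a ie e r m b i,
      i = aeval r ie -> i < msize m a ->
      spec_step (AWrite a ie e) r m b (Some (OWrite a i)) (Some DStep)
                Skip r (mupd m a i (aeval r e)) b
  | SS_WriteStore : forall a ie e r m i a' j,
      i = aeval r ie -> msize m a <= i -> j < msize m a' ->
      spec_step (AWrite a ie e) r m true (Some (OWrite a i)) (Some (DStore a' j))
                Skip r (mupd m a' j (aeval r e)) true.

Inductive multi_spec : com -> reg -> mem -> bool -> list dir -> list obs ->
                       com -> reg -> mem -> bool -> Prop :=
  | MS_Refl : forall c r m b, multi_spec c r m b [] [] c r m b
  | MS_Step : forall c r m b o d c' r' m' b' D O c'' r'' m'' b'',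
      spec_step c r m b o d c' r' m' b' ->
      multi_spec c' r' m' b' D O c'' r'' m'' b'' ->
      multi_spec c r m b (opt_list d ++ D) (opt_list o ++ O) c'' r'' m'' b''.

Definition spec_obs_equiv (c1 : com) (r1 : reg) (m1 : mem) (b1 : bool)
                          (c2 : com) (r2 : reg) (m2 : mem) (b2 : bool) : Prop :=
  forall D O1 O2 c1' r1' m1' b1' c2' r2' m2' b2',
    multi_spec c1 r1 m1 b1 D O1 c1' r1' m1' b1' ->
    multi_spec c2 r2 m2 b2 D O2 c2' r2' m2' b2' ->
    O1 = O2.

(* labels: true = public, false = secret *)
Definition label := bool.
Definition label_le (l1 l2 : label) : Prop := l2 = true -> l1 = true.

Definition pub_vars := var -> label.
Definition pub_arrs := arr -> label.

Definition label_of_aexp (P : pub_vars) (e : aexp) : label := forallb P (avars e).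
Definition label_of_bexp (P : pub_vars) (be : bexp) : label := forallb P (bvars be).

Definition pub_equiv (P : pub_vars) (r1 r2 : reg) : Prop :=
  forall x, P x = true -> r1 x = r2 x.

Definition pub_equiv_mem (PA : pub_arrs) (m1 m2 : mem) : Prop :=
  forall a, PA a = true -> m1 a = m2 a.

Inductive ct_well_typed (P : pub_vars) (PA : pub_arrs) : com -> Prop :=
  | CT_Skip : ct_well_typed P PA Skip
  | CT_Asgn : forall x e,
      label_le (label_of_aexp P e) (P x) -> ct_well_typed P PA (Asgn x e)
  | CT_Seq : forall c1 c2,
      ct_well_typed P PA c1 -> ct_well_typed P PA c2 ->
      ct_well_typed P PA (Seq c1 c2)
  | CT_If : forall be c1 c2,
      label_of_bexp P be = true ->
      ct_well_typed P PA c1 -> ct_well_typed P PA c2 ->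
      ct_well_typed P PA (If be c1 c2)
  | CT_While : forall be c,
      label_of_bexp P be = true -> ct_well_typed P PA c ->
      ct_well_typed P PA (While be c)
  | CT_ARead : forall x a i,
      label_of_aexp P i = true -> label_le (PA a) (P x) ->
      ct_well_typed P PA (ARead x a i)
  | CT_AWrite : forall a i e,
      label_of_aexp P i = true -> label_le (label_of_aexp P e) (PA a) ->
      ct_well_typed P PA (AWrite a i e).

Definition mask (i : aexp) : aexp :=
  ACTIf (BCmp Nat.eqb (AId bvar) (ANum 1)) (ANum 0) i.

(* Index-SLH recipe, instantiated as SiSLH_P:
   B(be) = be; R(X,i) = m(i) if P X public else i;
   W(i,e) = m(i) if P(e) secret else i. *)
Fixpoint sislh (P : pub_vars) (c : com) : com :=
  match c with
  | Skip => Skip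
  | Asgn x e => Asgn x e
  | Seq c1 c2 => Seq (sislh P c1) (sislh P c2)
  | If be c1 c2 =>
      If be (Seq (Asgn bvar (ACTIf be (AId bvar) (ANum 1))) (sislh P c1))
            (Seq (Asgn bvar (ACTIf be (ANum 1) (AId bvar))) (sislh P c2))
  | While be c1 =>
      Seq (While be (Seq (Asgn bvar (ACTIf be (AId bvar) (ANum 1))) (sislh P c1)))
          (Asgn bvar (ACTIf be (ANum 1) (AId bvar)))
  | ARead x a i => ARead x a (if P x then mask i else i)
  | AWrite a i e => AWrite a (if label_of_aexp P e then i else mask i) e
  end.

(* The two runs are simulated in lockstep: driven by the same directives they stay
   on the same command, observe the same thing and keep the same misspeculation
   flag, as long as registers agree on public variables and on the mask [b],
   public arrays agree, and [b] = 1 whenever misspeculating (up to a pending mask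
   update). Branch conditions and unmasked indices are public, so observations
   agree. Loads into public registers and stores of secret values use masked
   indices, which are 0 while misspeculating and hence in bounds because arrays are
   nonempty: so the out-of-bounds [load]/[store] directives, the only way secret
   data could reach a public register or array, never fire on them. *)

From Stdlib Require Import String List Lia.
Import ListNotations.

Fixpoint aeval_eq_on (r1 r2 : reg) (e : aexp) {struct e} :
  (forall x, In x (avars e) -> r1 x = r2 x) -> aeval r1 e = aeval r2 e
with beval_eq_on (r1 r2 : reg) (be : bexp) {struct be} :
  (forall x, In x (bvars be) -> r1 x = r2 x) -> beval r1 be = beval r2 be.
Proof.
- destruct e as [n | x | f es | be e1 e2]; simpl; intros Hagree.
  + reflexivity.
  + apply Hagree; left; reflexivity.
  + f_equal; induction es as [| e es IHes]; simpl in *; [reflexivity |].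
    f_equal; [apply aeval_eq_on | apply IHes]; intros; apply Hagree, in_or_app; auto.
  + rewrite (beval_eq_on r1 r2 be), (aeval_eq_on r1 r2 e1), (aeval_eq_on r1 r2 e2);
      [reflexivity | ..]; intros; apply Hagree; rewrite !in_app_iff; auto.
- destruct be as [| | f e1 e2 | f bs]; simpl; intros Hagree.
  + reflexivity.
  + reflexivity.
  + rewrite (aeval_eq_on r1 r2 e1), (aeval_eq_on r1 r2 e2);
      [reflexivity | ..]; intros; apply Hagree, in_or_app; auto.
  + f_equal; induction bs as [| be bs IHbs]; simpl in *; [reflexivity |].
    f_equal; [apply beval_eq_on | apply IHbs]; intros; apply Hagree, in_or_app; auto.
Qed.

Lemma aeval_pub_equiv (P : pub_vars) (r1 r2 : reg) (e : aexp) :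
  pub_equiv P r1 r2 -> label_of_aexp P e = true -> aeval r1 e = aeval r2 e.
Proof.
  unfold label_of_aexp; rewrite forallb_forall.
  intros Hr He; apply aeval_eq_on; auto.
Qed.

Lemma beval_pub_equiv (P : pub_vars) (r1 r2 : reg) (be : bexp) :
  pub_equiv P r1 r2 -> label_of_bexp P be = true -> beval r1 be = beval r2 be.
Proof.
  unfold label_of_bexp; rewrite forallb_forall.
  intros Hr Hbe; apply beval_eq_on; auto.
Qed.

Lemma upd_eq (r : reg) (x : var) (v : nat) : upd r x v x = v.
Proof. unfold upd; rewrite String.eqb_refl; reflexivity. Qed.

Lemma upd_neq (r : reg) (x y : var) (v : nat) : y <> x -> upd r x v y = r y.
Proof. intros Hyx; unfold upd; rewrite (proj2 (String.eqb_neq y x) Hyx); reflexivity. Qed.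

Lemma pub_equiv_upd (P : pub_vars) (r1 r2 : reg) (x : var) (v1 v2 : nat) :
  pub_equiv P r1 r2 -> (P x = true -> v1 = v2) ->
  pub_equiv P (upd r1 x v1) (upd r2 x v2).
Proof.
  intros Hr Hv y Hy; unfold upd.
  destruct (String.eqb_spec y x); subst; auto.
Qed.

Lemma pub_equiv_mem_mupd (PA : pub_arrs) (m1 m2 : mem) (a : arr) (i v1 v2 : nat) :
  pub_equiv_mem PA m1 m2 -> (PA a = true -> v1 = v2) ->
  pub_equiv_mem PA (mupd m1 a i v1) (mupd m2 a i v2).
Proof.
  intros Hm Hv a' Ha'; unfold mupd.
  destruct (String.eqb_spec a' a); subst; auto.
  rewrite (Hm a Ha'), (Hv Ha'); reflexivity.
Qed.

Lemma msize_mupd (m : mem) (a a' : arr) (i v : nat) :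
  i < msize m a -> msize (mupd m a i v) a' = msize m a'.
Proof.
  unfold msize, mupd; intros Hi.
  destruct (String.eqb_spec a' a); subst; auto.
  rewrite !length_app, length_firstn, length_skipn; simpl; lia.
Qed.

Definition arrays_nonempty (m : mem) : Prop := forall a, 0 < msize m a.

Lemma arrays_nonempty_mupd (m : mem) (a : arr) (i v : nat) :
  arrays_nonempty m -> i < msize m a -> arrays_nonempty (mupd m a i v).
Proof. intros Hm Hi a'; rewrite msize_mupd; auto. Qed.

Lemma spec_step_not_skip c r m b o d c' r' m' b' :
  spec_step c r m b o d c' r' m' b' -> c <> Skip.
Proof. destruct 1; discriminate. Qed.

Ltac skip_stuck :=
  match goal with
  | H : spec_step Skip _ _ _ _ _ _ _ _ _ |- _ =>
      destruct (spec_step_not_skip _ _ _ _ _ _ _ _ _ _ H eq_refl)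
  end.

Lemma spec_step_obs_none_iff_dir_none c r m b o d c' r' m' b' :
  spec_step c r m b o d c' r' m' b' -> (o = None <-> d = None).
Proof. induction 1; try tauto; split; discriminate. Qed.

Lemma spec_step_dir_none_agree c r1 m1 b1 o1 d1 c1 r1' m1' b1' r2 m2 b2 o2 d2 c2 r2' m2' b2' :
  spec_step c r1 m1 b1 o1 d1 c1 r1' m1' b1' ->
  spec_step c r2 m2 b2 o2 d2 c2 r2' m2' b2' ->
  (d1 = None <-> d2 = None).
Proof.
  intros S1; revert r2 m2 b2 o2 d2 c2 r2' m2' b2'.
  induction S1; intros ? ? ? ? ? ? ? ? ? S2; inversion S2; subst;
    try (split; congruence); try skip_stuck; eauto.
Qed.

Lemma multi_spec_no_dirs_no_obs c r m b O c' r' m' b' :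
  multi_spec c r m b [] O c' r' m' b' -> O = [].
Proof.
  intros H; remember [] as D eqn:HD.
  induction H as [| c r m b o d c' r' m' b' D O c'' r'' m'' b'' S _ IH]; auto.
  apply app_eq_nil in HD as [Hd HD].
  destruct d; [discriminate |].
  apply spec_step_obs_none_iff_dir_none in S.
  rewrite (proj2 S eq_refl); simpl; auto.
Qed.

Lemma opt_list_app_inj {A : Type} (x1 x2 : option A) (l1 l2 : list A) :
  (x1 = None <-> x2 = None) -> opt_list x1 ++ l1 = opt_list x2 ++ l2 ->
  x1 = x2 /\ l1 = l2.
Proof.
  destruct x1 as [y1 |], x2 as [y2 |]; simpl; intros Hnone Heq.
  - injection Heq as -> ->; auto.
  - discriminate (proj2 Hnone eq_refl).
  - discriminate (proj1 Hnone eq_refl).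
  - auto.
Qed.

Notation mask_then be := (Asgn bvar (ACTIf be (AId bvar) (ANum 1))).
Notation mask_else be := (Asgn bvar (ACTIf be (ANum 1) (AId bvar))).
Notation hardened_loop be c := (While be (Seq (mask_then be) c)).

Inductive mask_pending (r : reg) : com -> Prop :=
  | MP_Then be : beval r be = false -> mask_pending r (mask_then be)
  | MP_Else be : beval r be = true -> mask_pending r (mask_else be)
  | MP_SeqSkip c : mask_pending r c -> mask_pending r (Seq Skip c)
  | MP_Seq c1 c2 : mask_pending r c1 -> mask_pending r (Seq c1 c2).

Fixpoint starts_with_bvar_update (c : com) : Prop :=
  match c with
  | Asgn x _ => x = bvar
  | Seq Skip c2 => starts_with_bvar_update c2
  | Seq c1 _ => starts_with_bvar_update c1
  | _ => False
  end.

Lemma mask_pending_starts_with_bvar_update r c :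
  mask_pending r c -> starts_with_bvar_update c.
Proof.
  induction 1 as [| | | c1 c2 H IH]; simpl; auto.
  destruct c1; auto; inversion H.
Qed.

(* During misspeculation the mask [b] is 1, except right after a forced branch,
   where the next step is the mask update that sets it to 1. *)
Definition mask_inv (c : com) (r : reg) (b : bool) : Prop :=
  b = true -> r bvar = 1 \/ mask_pending r c.

Lemma mask_inv_of_bvar c r b : (b = true -> r bvar = 1) -> mask_inv c r b.
Proof. intros H Hb; left; auto. Qed.

Lemma mask_inv_false c r : mask_inv c r false.
Proof. apply mask_inv_of_bvar; discriminate. Qed.

Lemma mask_inv_bvar_one c r b :
  mask_inv c r b -> ~ starts_with_bvar_update c -> b = true -> r bvar = 1.
Proof.
  intros H Hc Hb; destruct (H Hb) as [| Hp]; auto.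
  destruct (Hc (mask_pending_starts_with_bvar_update _ _ Hp)).
Qed.

Lemma mask_inv_seq c1 c2 r b : mask_inv c1 r b -> mask_inv (Seq c1 c2) r b.
Proof. intros H Hb; destruct (H Hb); [left | right; constructor]; auto. Qed.

Lemma mask_inv_seq_l c1 c2 r b :
  c1 <> Skip -> mask_inv (Seq c1 c2) r b -> mask_inv c1 r b.
Proof.
  intros Hc1 H Hb; destruct (H Hb) as [| Hp]; auto.
  inversion Hp; subst; auto; congruence.
Qed.

Lemma mask_inv_seq_skip c r b : mask_inv (Seq Skip c) r b -> mask_inv c r b.
Proof.
  intros H Hb; destruct (H Hb) as [| Hp]; auto.
  inversion Hp as [| | | ? ? Hs]; auto; inversion Hs.
Qed.

Lemma mask_pending_forced_branch r be c1 c2 :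
  mask_pending r (if negb (beval r be) then Seq (mask_then be) c1
                  else Seq (mask_else be) c2).
Proof. destruct (beval r be) eqn:E; simpl; repeat constructor; auto. Qed.

Lemma mask_pending_forced_loop r be c :
  mask_pending r (Seq (if negb (beval r be)
                       then Seq (Seq (mask_then be) c) (hardened_loop be c) else Skip)
                      (mask_else be)).
Proof. destruct (beval r be) eqn:E; simpl; repeat constructor; auto. Qed.

Lemma mask_then_eval be r b :
  mask_inv (mask_then be) r b -> b = true -> aeval r (ACTIf be (AId bvar) (ANum 1)) = 1.
Proof.
  intros H Hb; simpl.
  destruct (H Hb) as [E | Hp]; [destruct (beval r be); auto |].
  inversion Hp as [? E | ? E | |]; rewrite E; auto.
Qed.

Lemma mask_else_eval be r b :
  mask_inv (mask_else be) r b -> b = true -> aeval r (ACTIf be (ANum 1) (AId bvar)) = 1.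
Proof.
  intros H Hb; simpl.
  destruct (H Hb) as [E | Hp]; [destruct (beval r be); auto |].
  inversion Hp as [? E | ? E | |]; rewrite E; auto.
Qed.

Lemma masked_index_in_bounds m r a i :
  arrays_nonempty m -> r bvar = 1 -> msize m a <= aeval r (mask i) -> False.
Proof. simpl; intros Hm ->; specialize (Hm a); simpl; lia. Qed.

Section Lockstep.

Variables (P : pub_vars) (PA : pub_arrs).

(* The commands met while running [sislh P c] for a well-typed [c] that does not
   use [bvar]; the three loop constructors are the unfolding states of a loop. *)
Inductive hardened : com -> Prop :=
  | H_Skip : hardened Skip
  | H_Asgn x e : x <> bvar -> label_le (label_of_aexp P e) (P x) -> hardened (Asgn x e)
  | H_MaskThen be : label_of_bexp P be = true -> hardened (mask_then be)
  | H_MaskElse be : label_of_bexp P be = true -> hardened (mask_else be)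
  | H_Seq c1 c2 : hardened c1 -> hardened c2 -> hardened (Seq c1 c2)
  | H_If be c1 c2 : label_of_bexp P be = true -> hardened c1 -> hardened c2 ->
      hardened (If be (Seq (mask_then be) c1) (Seq (mask_else be) c2))
  | H_Loop be c : label_of_bexp P be = true -> hardened c ->
      hardened (Seq (hardened_loop be c) (mask_else be))
  | H_LoopUnfolded be c : label_of_bexp P be = true -> hardened c ->
      hardened (Seq (If be (Seq (Seq (mask_then be) c) (hardened_loop be c)) Skip)
                    (mask_else be))
  | H_LoopBody be c c' : label_of_bexp P be = true -> hardened c -> hardened c' ->
      hardened (Seq (Seq c' (hardened_loop be c)) (mask_else be))
  | H_Read x a i : x <> bvar -> label_of_aexp P i = true -> label_le (PA a) (P x) ->
      hardened (ARead x a (if P x then mask i else i))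
  | H_Write a i e : label_of_aexp P i = true -> label_le (label_of_aexp P e) (PA a) ->
      hardened (AWrite a (if label_of_aexp P e then i else mask i) e).

Lemma sislh_hardened c :
  ct_well_typed P PA c -> ~ In bvar (UsedVars c) -> hardened (sislh P c).
Proof.
  induction 1; simpl; rewrite ?in_app_iff; intros Hb;
    first [apply H_Loop | constructor]; try tauto.
  all: intros ->; tauto.
Qed.

Definition related (c : com) (r1 : reg) (m1 : mem) (r2 : reg) (m2 : mem) (b : bool) : Prop :=
  mask_inv c r1 b /\ mask_inv c r2 b /\
  pub_equiv P r1 r2 /\ r1 bvar = r2 bvar /\ pub_equiv_mem PA m1 m2 /\
  arrays_nonempty m1 /\ arrays_nonempty m2.

Definition lockstep (c : com) : Prop :=
  forall r1 m1 r2 m2 b o1 o2 d c1 c2 r1' m1' b1 r2' m2' b2,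
  related c r1 m1 r2 m2 b ->
  spec_step c r1 m1 b o1 d c1 r1' m1' b1 ->
  spec_step c r2 m2 b o2 d c2 r2' m2' b2 ->
  o1 = o2 /\ c1 = c2 /\ b1 = b2 /\ hardened c1 /\ related c1 r1' m1' r2' m2' b1.

Lemma related_seq c1 c2 r1 m1 r2 m2 b :
  related c1 r1 m1 r2 m2 b -> related (Seq c1 c2) r1 m1 r2 m2 b.
Proof. intros (I1 & I2 & R); split; [|split]; auto using mask_inv_seq. Qed.

Lemma related_seq_l c1 c2 r1 m1 r2 m2 b :
  c1 <> Skip -> related (Seq c1 c2) r1 m1 r2 m2 b -> related c1 r1 m1 r2 m2 b.
Proof. intros Hc1 (I1 & I2 & R); split; [|split]; eauto using mask_inv_seq_l. Qed.

Lemma related_seq_skip c r1 m1 r2 m2 b :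
  related (Seq Skip c) r1 m1 r2 m2 b -> related c r1 m1 r2 m2 b.
Proof. intros (I1 & I2 & R); split; [|split]; auto using mask_inv_seq_skip. Qed.

Lemma related_change_command c c' r1 m1 r2 m2 b :
  ~ starts_with_bvar_update c -> related c r1 m1 r2 m2 b -> related c' r1 m1 r2 m2 b.
Proof.
  intros Hc (I1 & I2 & R); split; [|split]; auto;
    apply mask_inv_of_bvar; eapply mask_inv_bvar_one; eauto.
Qed.

Lemma lockstep_asgn x e :
  x <> bvar -> label_le (label_of_aexp P e) (P x) -> lockstep (Asgn x e).
Proof.
  intros Hx He r1 m1 r2 m2 b o1 o2 d c1 c2 r1' m1' b1 r2' m2' b2
    (I1 & I2 & Hr & Hb & Hm & N1 & N2) S1 S2.
  inversion S1; subst; inversion S2; subst.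
  assert (Hbx : bvar <> x) by congruence.
  repeat split; auto using hardened.
  - apply mask_inv_of_bvar; rewrite upd_neq by exact Hbx; exact (mask_inv_bvar_one _ _ _ I1 Hx).
  - apply mask_inv_of_bvar; rewrite upd_neq by exact Hbx; exact (mask_inv_bvar_one _ _ _ I2 Hx).
  - apply pub_equiv_upd; auto; intros Px; apply aeval_pub_equiv with P; auto.
  - rewrite !upd_neq by exact Hbx; exact Hb.
Qed.

Lemma lockstep_bvar_update e :
  (forall r1 r2, pub_equiv P r1 r2 -> r1 bvar = r2 bvar -> aeval r1 e = aeval r2 e) ->
  (forall r b, mask_inv (Asgn bvar e) r b -> b = true -> aeval r e = 1) ->
  lockstep (Asgn bvar e).
Proof.
  intros He Hset r1 m1 r2 m2 b o1 o2 d c1 c2 r1' m1' b1 r2' m2' b2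
    (I1 & I2 & Hr & Hb & Hm & N1 & N2) S1 S2.
  inversion S1; subst; inversion S2; subst.
  repeat split; auto using hardened.
  - intros Hb1; left; rewrite upd_eq; exact (Hset _ _ I1 Hb1).
  - intros Hb1; left; rewrite upd_eq; exact (Hset _ _ I2 Hb1).
  - apply pub_equiv_upd; auto.
  - rewrite !upd_eq; auto.
Qed.

Lemma lockstep_mask_then be : label_of_bexp P be = true -> lockstep (mask_then be).
Proof.
  intros Hbe; apply lockstep_bvar_update; [| exact (mask_then_eval be)].
  intros r1 r2 Hr Hb; simpl; rewrite (beval_pub_equiv P r1 r2 be), Hb; auto.
Qed.

Lemma lockstep_mask_else be : label_of_bexp P be = true -> lockstep (mask_else be).
Proof.
  intros Hbe; apply lockstep_bvar_update; [| exact (mask_else_eval be)].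
  intros r1 r2 Hr Hb; simpl; rewrite (beval_pub_equiv P r1 r2 be), Hb; auto.
Qed.

Lemma lockstep_seq c1 c2 : hardened c2 -> lockstep c1 -> lockstep (Seq c1 c2).
Proof.
  intros H2 L1 r1 m1 r2 m2 b o1 o2 d c1_ c2_ r1' m1' b1 r2' m2' b2 R S1 S2.
  inversion S1; subst; inversion S2; subst; try skip_stuck.
  - assert (Rc1 : related c1 r1 m1 r2 m2 b)
      by (eapply related_seq_l; eauto; eapply spec_step_not_skip; eauto).
    match goal with
    | A : spec_step c1 r1 _ _ _ _ _ _ _ _, B : spec_step c1 r2 _ _ _ _ _ _ _ _ |- _ =>
        destruct (L1 _ _ _ _ _ _ _ _ _ _ _ _ _ _ _ _ Rc1 A B) as (-> & -> & -> & Hc & R')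
    end.
    do 3 (split; [reflexivity |]); split; auto using hardened, related_seq.
  - do 3 (split; [reflexivity |]); split; auto using related_seq_skip.
Qed.

Lemma lockstep_if be c1 c2 :
  label_of_bexp P be = true -> hardened c1 -> hardened c2 ->
  lockstep (If be (Seq (mask_then be) c1) (Seq (mask_else be) c2)).
Proof.
  intros Hbe H1 H2 r1 m1 r2 m2 b o1 o2 d c1_ c2_ r1' m1' b1 r2' m2' b2 R S1 S2.
  assert (Ebe : beval r1 be = beval r2 be)
    by (destruct R as (_ & _ & Hr & _); apply beval_pub_equiv with P; auto).
  assert (Hc : forall v : bool,
            hardened (if v then Seq (mask_then be) c1 else Seq (mask_else be) c2))
    by (intros []; auto using hardened).
  inversion S1; subst; inversion S2; subst; rewrite Ebe.
  - do 3 (split; [reflexivity |]); split; [auto |].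
    eapply related_change_command; [| exact R]; simpl; auto.
  - do 3 (split; [reflexivity |]); split; [auto |].
    destruct R as (I1 & I2 & R); split; [| split]; auto; intros _; right.
    + rewrite <- Ebe; apply mask_pending_forced_branch.
    + apply mask_pending_forced_branch.
Qed.

Lemma lockstep_loop be c :
  label_of_bexp P be = true -> hardened c ->
  lockstep (Seq (hardened_loop be c) (mask_else be)).
Proof.
  intros Hbe Hc r1 m1 r2 m2 b o1 o2 d c1 c2 r1' m1' b1 r2' m2' b2 R S1 S2.
  inversion S1; subst; inversion S2; subst; try skip_stuck.
  do 2 match goal with H : spec_step (While _ _) _ _ _ _ _ _ _ _ _ |- _ =>
                         inversion H; subst; clear H end.
  do 3 (split; [reflexivity |]); split; [auto using hardened |].
  eapply related_change_command; [| exact R]; simpl; auto.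
Qed.

Lemma lockstep_loop_unfolded be c :
  label_of_bexp P be = true -> hardened c ->
  lockstep (Seq (If be (Seq (Seq (mask_then be) c) (hardened_loop be c)) Skip)
                (mask_else be)).
Proof.
  intros Hbe Hc r1 m1 r2 m2 b o1 o2 d c1 c2 r1' m1' b1 r2' m2' b2 R S1 S2.
  assert (Ebe : beval r1 be = beval r2 be)
    by (destruct R as (_ & _ & Hr & _); apply beval_pub_equiv with P; auto).
  assert (Hbranch : forall v : bool,
            hardened (Seq (if v then Seq (Seq (mask_then be) c) (hardened_loop be c) else Skip)
                          (mask_else be)))
    by (intros []; auto using hardened).
  inversion S1; subst; inversion S2; subst; try skip_stuck.
  do 2 match goal with H : spec_step (If _ _ _) _ _ _ _ _ _ _ _ _ |- _ =>
                         inversion H; subst; clear H end;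
    rewrite Ebe.
  - do 3 (split; [reflexivity |]); split; [auto |].
    eapply related_change_command; [| exact R]; simpl; auto.
  - do 3 (split; [reflexivity |]); split; [auto |].
    destruct R as (I1 & I2 & R); split; [| split]; auto; intros _; right.
    + rewrite <- Ebe; apply mask_pending_forced_loop.
    + apply mask_pending_forced_loop.
Qed.

Lemma lockstep_loop_body be c c' :
  label_of_bexp P be = true -> hardened c -> lockstep c' ->
  lockstep (Seq (Seq c' (hardened_loop be c)) (mask_else be)).
Proof.
  intros Hbe Hc L' r1 m1 r2 m2 b o1 o2 d c1 c2 r1' m1' b1 r2' m2' b2 R S1 S2.
  inversion S1; subst; inversion S2; subst; try skip_stuck.
  do 2 match goal with H : spec_step (Seq _ (While _ _)) _ _ _ _ _ _ _ _ _ |- _ =>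
                         inversion H; subst; clear H end;
    try skip_stuck.
  - assert (Rc' : related c' r1 m1 r2 m2 b).
    { eapply related_seq_l, related_seq_l; eauto; [| discriminate].
      eapply spec_step_not_skip; eauto. }
    match goal with
    | A : spec_step c' r1 _ _ _ _ _ _ _ _, B : spec_step c' r2 _ _ _ _ _ _ _ _ |- _ =>
        destruct (L' _ _ _ _ _ _ _ _ _ _ _ _ _ _ _ _ Rc' A B) as (-> & -> & -> & Hc' & R')
    end.
    do 3 (split; [reflexivity |]); split; auto using hardened, related_seq.
  - do 3 (split; [reflexivity |]); split; [auto using hardened |].
    eapply related_change_command; [| exact R]; simpl; auto.
Qed.

Lemma aeval_mask_pub_equiv r1 r2 i :
  pub_equiv P r1 r2 -> r1 bvar = r2 bvar -> label_of_aexp P i = true ->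
  aeval r1 (mask i) = aeval r2 (mask i).
Proof. intros Hr Hb Hi; simpl; rewrite Hb, (aeval_pub_equiv P r1 r2 i); auto. Qed.

Lemma lockstep_read x a i :
  x <> bvar -> label_of_aexp P i = true -> label_le (PA a) (P x) ->
  lockstep (ARead x a (if P x then mask i else i)).
Proof.
  intros Hx Hi Ha r1 m1 r2 m2 b o1 o2 d c1 c2 r1' m1' b1 r2' m2' b2
    (I1 & I2 & Hr & Hb & Hm & N1 & N2) S1 S2.
  set (ie := if P x then mask i else i) in *.
  assert (Eie : aeval r1 ie = aeval r2 ie)
    by (unfold ie; destruct (P x); eauto using aeval_mask_pub_equiv, aeval_pub_equiv).
  assert (Hb1 : b = true -> r1 bvar = 1) by exact (mask_inv_bvar_one _ _ _ I1 (fun f => f)).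
  assert (Hb2 : b = true -> r2 bvar = 1) by exact (mask_inv_bvar_one _ _ _ I2 (fun f => f)).
  assert (Hbx : bvar <> x) by congruence.
  inversion S1; subst; inversion S2; subst; rewrite Eie.
  - repeat split; auto using hardened.
    + apply mask_inv_of_bvar; rewrite upd_neq; auto.
    + apply mask_inv_of_bvar; rewrite upd_neq; auto.
    + apply pub_equiv_upd; auto; intros Px; unfold mget; rewrite (Hm a (Ha Px)); auto.
    + rewrite !upd_neq; auto.
  - destruct (P x) eqn:Px.
    + exfalso; unfold ie in *; eapply masked_index_in_bounds; eauto.
    + repeat split; auto using hardened.
      * apply mask_inv_of_bvar; rewrite upd_neq; auto.
      * apply mask_inv_of_bvar; rewrite upd_neq; auto.
      * apply pub_equiv_upd; auto; congruence.
      * rewrite !upd_neq; auto.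
Qed.

Lemma lockstep_write a i e :
  label_of_aexp P i = true -> label_le (label_of_aexp P e) (PA a) ->
  lockstep (AWrite a (if label_of_aexp P e then i else mask i) e).
Proof.
  intros Hi Ha r1 m1 r2 m2 b o1 o2 d c1 c2 r1' m1' b1 r2' m2' b2
    (I1 & I2 & Hr & Hb & Hm & N1 & N2) S1 S2.
  set (ie := if label_of_aexp P e then i else mask i) in *.
  assert (Eie : aeval r1 ie = aeval r2 ie)
    by (unfold ie; destruct (label_of_aexp P e);
        eauto using aeval_mask_pub_equiv, aeval_pub_equiv).
  assert (Hb1 : b = true -> r1 bvar = 1) by exact (mask_inv_bvar_one _ _ _ I1 (fun f => f)).
  assert (Hb2 : b = true -> r2 bvar = 1) by exact (mask_inv_bvar_one _ _ _ I2 (fun f => f)).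
  assert (Ev : label_of_aexp P e = true -> aeval r1 e = aeval r2 e)
    by eauto using aeval_pub_equiv.
  inversion S1; subst; inversion S2; subst; rewrite Eie.
  - repeat split; auto using hardened, mask_inv_of_bvar.
    + apply pub_equiv_mem_mupd; auto.
    + apply arrays_nonempty_mupd; [| rewrite <- Eie]; auto.
    + apply arrays_nonempty_mupd; auto.
  - destruct (label_of_aexp P e) eqn:Pe.
    + repeat split; auto using hardened, mask_inv_of_bvar, pub_equiv_mem_mupd,
        arrays_nonempty_mupd.
    + exfalso; unfold ie in *; eapply masked_index_in_bounds; eauto.
Qed.

Lemma hardened_lockstep c : hardened c -> lockstep c.
Proof.
  induction 1; auto using lockstep_asgn, lockstep_mask_then, lockstep_mask_else,
    lockstep_seq, lockstep_if, lockstep_loop, lockstep_loop_unfolded, lockstep_loop_body,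
    lockstep_read, lockstep_write.
  intros ? ? ? ? ? ? ? ? ? ? ? ? ? ? ? ? _ S; inversion S.
Qed.

End Lockstep.

Lemma related_multi_spec_obs_eq P PA c r1 m1 b D O1 c1 r1' m1' b1 :
  multi_spec c r1 m1 b D O1 c1 r1' m1' b1 ->
  forall r2 m2 O2 c2 r2' m2' b2,
  multi_spec c r2 m2 b D O2 c2 r2' m2' b2 ->
  hardened P PA c -> related P PA c r1 m1 r2 m2 b -> O1 = O2.
Proof.
  induction 1 as [c r m b | c r m b o d c' r' m' b' D O c'' r'' m'' b'' S1 M1 IH];
    intros r2 m2 O2 c2 r2' m2' b2 M2 Hc R.
  - symmetry; eapply multi_spec_no_dirs_no_obs; eauto.
  - inversion M2 as [| ? ? ? ? o2 d2 ? ? ? ? D2 ? ? ? ? ? S2]; subst.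
    + pose proof (MS_Step _ _ _ _ _ _ _ _ _ _ _ _ _ _ _ _ S1 M1) as M.
      match goal with HD : [] = opt_list d ++ D |- _ => rewrite <- HD in M end.
      exact (multi_spec_no_dirs_no_obs _ _ _ _ _ _ _ _ _ M).
    + destruct (opt_list_app_inj d d2 D D2) as [<- <-]; auto.
      { eapply spec_step_dir_none_agree; eauto. }
      destruct (hardened_lockstep P PA c Hc _ _ _ _ _ _ _ _ _ _ _ _ _ _ _ _ R S1 S2)
        as (<- & <- & <- & Hc' & R').
      f_equal; eapply IH; eauto.
Qed.

Theorem theorem3p1 (P : pub_vars) (PA : pub_arrs) (c : com)
    (r1 r2 : reg) (m1 m2 : mem) :
  ~ In bvar (UsedVars c) ->
  r1 bvar = 0 -> r2 bvar = 0 ->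
  (forall a, 0 < msize m1 a) -> (forall a, 0 < msize m2 a) ->
  ct_well_typed P PA c ->
  pub_equiv P r1 r2 ->
  pub_equiv_mem PA m1 m2 ->
  spec_obs_equiv (sislh P c) r1 m1 false (sislh P c) r2 m2 false.
Proof.
  intros Hc Hb1 Hb2 N1 N2 Hwt Hr Hm D O1 O2 c1 r1' m1' b1 c2 r2' m2' b2 M1 M2.
  eapply related_multi_spec_obs_eq; eauto using sislh_hardened.
  repeat split; auto using mask_inv_false; congruence.
Qed.
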